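(* Fix $\beta>0$ and $h\in\mathbb{R}$, and suppose there is a number $q$ and a constant $C_0$ depending only on $\beta,h$ such that for every $N$, $$\mathbb{E}\langle (R_{12}-q)^4\rangle \le \frac{C_0}{N^2}.$$ Let $v_1,\dots,v_N,w_1,\dots,w_N$ be arbitrary (real-valued) functions of $g$ and $\sigma$. Then, with a constant $C(\beta,h)$ depending only on $\beta,h$ (and the constants in the hypothesis), $$\mathbb{E}\Bigl(\frac{1}{N^2}\sum_{j,k=1}^N\langle\dot\sigma_jv_k\rangle\langle w_k\sigma_j\rangle\Bigr) \le \frac{C(\beta,h)}{N^{3/2}}\sum_{k=1}^N\bigl(\mathbb{E}\langle v_k^2\rangle\langle w_k^2\rangle\bigr)^{1/2}.$$
   Context: Sherrington–Kirkpatrick model: for a positive integer $N$, let $\Sigma_N=\{-1,1\}^N$ and let $g=(g_{ij})_{1\le i<j\le N}$ be i.i.d. standard Gaussian random variables (the disorder). Given $g$, the Gibbs measure on $\Sigma_N$ is $G_N(\sigma)=Z_N^{-1}\exp\bigl(\frac{\beta}{\sqrt N}\sum_{1\le i<j\le N} g_{ij}\sigma_i\sigma_j + h\sum_{i=1}^N\sigma_i\bigr)$, with $Z_N$ the normalizing constant. Replicas $\sigma^1,\sigma^2,\dots$ are independent samples from $G_N$ given $g$, and for a function $f$ of $g$ and replicas, $\langle f\rangle$ denotes the quenched average (expectation over replicas with $g$ fixed); in $\langle\dot\sigma_jv_k\rangle$ the functions are evaluated at the same configuration $\sigma$. $\mathbb{E}$ is expectation over the disorder. The overlap is $R_{12}=\frac1N\sum_{i=1}^N\sigma^1_i\sigma^2_i$.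 For each $j$, $\dot\sigma_j := \sigma_j - \langle\sigma_j\rangle$. *)

From HB Require Import structures.
From mathcomp Require Import all_boot all_order all_algebra.
From mathcomp Require Import all_classical all_reals all_analysis.
Set Implicit Arguments. Unset Strict Implicit. Unset Printing Implicit Defensive.
Import Order.TTheory GRing.Theory Num.Theory.
Local Open Scope classical_set_scope.
Local Open Scope ring_scope.

(* Configurations sigma in Sigma_N = {-1,1}^N, encoded as boolean vectors:
   spin s i = 1 if s i = true, -1 otherwise. *)
Definition config (N : nat) := {ffun 'I_N -> bool}.

Section SK.
Variable R : realType.

Definition spin (N : nat) (s : config N) (i : 'I_N) : R := if s i then 1 else -1.

(* A disorder realization: g i j is used only for i < j. *)
Definition disorder (N : nat) := 'I_N -> 'I_N -> R.

Definition sk_energy (beta h : R) (N : nat) (g : disorder N) (s : config N) : R :=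
  beta / Num.sqrt N%:R *
    (\sum_(i < N) \sum_(j < N | (i < j)%N) g i j * spin s i * spin s j)
  + h * \sum_(i < N) spin s i.

Definition gibbs_weight beta h N (g : disorder N) (s : config N) : R :=
  expR (sk_energy beta h g s).

Definition partition_fn beta h N (g : disorder N) : R :=
  \sum_(s : config N) gibbs_weight beta h g s.

Definition gibbs1 beta h N (g : disorder N) (f : config N -> R) : R :=
  (\sum_(s : config N) gibbs_weight beta h g s * f s) / partition_fn beta h g.

Definition gibbs2 beta h N (g : disorder N) (f : config N -> config N -> R) : R :=
  (\sum_(s1 : config N) \sum_(s2 : config N)
      gibbs_weight beta h g s1 * gibbs_weight beta h g s2 * f s1 s2)
  / (partition_fn beta h g ^+ 2).

Definition overlap N (s1 s2 : config N) : R :=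
  (\sum_(i < N) spin s1 i * spin s2 i) / N%:R.

Definition sdot beta h N (g : disorder N) (j : 'I_N) (s : config N) : R :=
  spin s j - gibbs1 beta h g (fun s' => spin s' j).

Definition iid_std_gaussian_disorder d (T : measurableType d)
    (P : probability T R) (N : nat) (G : 'I_N -> 'I_N -> T -> R) : Prop :=
  [/\ (forall i j : 'I_N, (i < j)%N -> measurable_fun setT (G i j)),
      (forall i j : 'I_N, (i < j)%N -> forall B : set R, measurable B ->
          P (G i j @^-1` B) = normal_prob 0 1 B) &
      (forall B : 'I_N -> 'I_N -> set R,
          (forall i j : 'I_N, (i < j)%N -> measurable (B i j)) ->
          fine (P (\big[setI/setT]_(i < N) \big[setI/setT]_(j < N | (i < j)%N)
                     (G i j @^-1` B i j)))
          = \prod_(i < N) \prod_(j < N | (i < j)%N) fine (P (G i j @^-1` B i j)))].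

Definition disorder_at N d (T : measurableType d) (G : 'I_N -> 'I_N -> T -> R)
  (w : T) : disorder N := fun i j => G i j w.

End SK.

From HB Require Import structures.
From mathcomp Require Import all_boot all_order all_algebra.
From mathcomp Require Import all_classical all_reals all_analysis.
From mathcomp Require Import ring lra measurable_realfun.
Set Implicit Arguments. Unset Strict Implicit. Unset Printing Implicit Defensive.
Import Order.TTheory GRing.Theory Num.Theory.
Local Open Scope ring_scope.

(* For a fixed disorder, <sdot_j v_k> <w_k sigma_j> is an average over two
   replicas s, t of v_k(s) w_k(t) sdot_j(s) sigma_j(t), and summing over j turns
   sdot_j(s) sigma_j(t) into N (R(s,t) - <R(.,t)>).  Cauchy-Schwarz under the
   product Gibbs measure bounds the j-sum by
   2 N <v_k^2>^(1/2) <w_k^2>^(1/2) <(R_12 - q)^4>^(1/4); integrating over the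
   disorder, Cauchy-Schwarz again and Jensen for the square root give
   E <(R_12 - q)^4>^(1/2) <= (C0 / N^2)^(1/2), which yields the factor N^(-3/2). *)

Section WeightedSums.
Variables (R : realType) (I : finType).

Lemma weighted_cauchy_schwarz (c x y : I -> R) : (forall i, 0 <= c i) ->
  (\sum_i c i * x i * y i) ^+ 2 <= (\sum_i c i * x i ^+ 2) * (\sum_i c i * y i ^+ 2).
Proof.
move=> c_ge0.
set A := \sum_i c i * x i ^+ 2; set B := \sum_i c i * x i * y i.
set C := \sum_i c i * y i ^+ 2.
have sum_sqr_ge0 (z : I -> R) : 0 <= \sum_i c i * z i ^+ 2.
  by apply: sumr_ge0 => i _; rewrite mulr_ge0 // sqr_ge0.
have quad_ge0 t : 0 <= t ^+ 2 * A + 2 * t * B + C.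
  have -> : t ^+ 2 * A + 2 * t * B + C = \sum_i c i * (t * x i + y i) ^+ 2.
    rewrite /A /B /C !mulr_sumr -!big_split /=; apply: eq_bigr => i _; ring.
  exact: sum_sqr_ge0.
have [A_gt0|A_le0] := ltP 0 A.
  have := quad_ge0 (- B / A).
  have -> : (- B / A) ^+ 2 * A + 2 * (- B / A) * B + C = (A * C - B ^+ 2) / A.
    by field; rewrite gt_eqF.
  by rewrite pmulr_lge0 ?invr_gt0 // subr_ge0.
have A0 : A = 0 by apply/eqP; rewrite eq_le A_le0 sum_sqr_ge0.
suff -> : B = 0 by rewrite A0 expr0n /= mul0r.
have cx2_0 i : c i * x i ^+ 2 = 0.
  by apply: (psumr_eq0P _ A0) => // j _; rewrite mulr_ge0 // sqr_ge0.
rewrite /B big1 // => i _; apply/eqP; rewrite -sqrf_eq0.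
have -> : (c i * x i * y i) ^+ 2 = c i * x i ^+ 2 * (c i * y i ^+ 2) by ring.
by rewrite cx2_0 mul0r.
Qed.

End WeightedSums.

Lemma weighted_cauchy_schwarz2 (R : realType) (I : finType) (c x y : I -> I -> R) :
  (forall s t, 0 <= c s t) ->
  (\sum_s \sum_t c s t * x s t * y s t) ^+ 2 <=
  (\sum_s \sum_t c s t * x s t ^+ 2) * (\sum_s \sum_t c s t * y s t ^+ 2).
Proof.
move=> c_ge0; rewrite !pair_big /=.
by apply: weighted_cauchy_schwarz => -[s t]; exact: c_ge0.
Qed.

Section ProbabilityWeights.
Variables (R : realType) (I : finType) (mu : I -> R).
Hypotheses (mu_ge0 : forall i, 0 <= mu i) (mu_sum1 : \sum_i mu i = 1).

Lemma weighted_jensen_sqr (z : I -> R) :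
  (\sum_i mu i * z i) ^+ 2 <= \sum_i mu i * z i ^+ 2.
Proof.
have := weighted_cauchy_schwarz (fun _ => 1) z mu_ge0.
have -> : \sum_i mu i * 1 ^+ 2 = 1 by under eq_bigr do rewrite expr1n mulr1.
by rewrite mul1r; under eq_bigr do rewrite mulr1.
Qed.

Lemma product_weight_sum1 : \sum_s \sum_t mu s * mu t = 1.
Proof. by under eq_bigr do rewrite -mulr_sumr mu_sum1 mulr1. Qed.

Lemma product_weight_sqr_le_sqrt_pow4 (z : I -> I -> R) :
  \sum_s \sum_t mu s * mu t * z s t ^+ 2 <=
  Num.sqrt (\sum_s \sum_t mu s * mu t * z s t ^+ 4).
Proof.
have := weighted_cauchy_schwarz2 (fun _ _ => 1) (fun s t => z s t ^+ 2)
  (fun s t => mulr_ge0 (mu_ge0 s) (mu_ge0 t)).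
have -> : \sum_s \sum_t mu s * mu t * 1 ^+ 2 = 1.
  by rewrite -[RHS]product_weight_sum1; under eq_bigr do under eq_bigr do rewrite expr1n mulr1.
under eq_bigr do under eq_bigr do rewrite mulr1.
under [in X in _ * X]eq_bigr do under eq_bigr do rewrite -exprM.
rewrite mul1r => le_sqr; apply: le_trans (ler_norm _) _.
by rewrite -sqrtr_sqr ler_wsqrtr.
Qed.

End ProbabilityWeights.

Section CenteredOverlap.
Variables (R : realType) (N : nat) (mu : config N -> R).
Hypotheses (N_gt0 : (0 < N)%N) (mu_ge0 : forall s, 0 <= mu s) (mu_sum1 : \sum_s mu s = 1).

Definition centered_overlap (s t : config N) : R :=
  \sum_(j < N) (spin R s j - \sum_u mu u * spin R u j) * spin R t j.

Lemma centered_overlapE (q : R) s t :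
  centered_overlap s t =
  N%:R * ((overlap R s t - q) - \sum_u mu u * (overlap R u t - q)).
Proof.
have N_neq0 : N%:R != 0 :> R by rewrite pnatr_eq0 -lt0n.
have spin_sumE u : \sum_(j < N) spin R u j * spin R t j = N%:R * overlap R u t.
  by rewrite /overlap mulrC divfK.
have mean_termE : \sum_(j < N) (\sum_u mu u * spin R u j) * spin R t j =
    N%:R * \sum_u mu u * overlap R u t.
  under eq_bigr do rewrite mulr_suml.
  rewrite exchange_big mulr_sumr; apply: eq_bigr => u _.
  by rewrite -mulrCA -spin_sumE mulr_sumr; apply: eq_bigr => j _; rewrite mulrA.
rewrite /centered_overlap; under eq_bigr do rewrite mulrBl.
rewrite sumrB spin_sumE mean_termE.
under [X in _ = _ * (_ - X)]eq_bigr do rewrite mulrBr.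
rewrite sumrB -mulr_suml mu_sum1; ring.
Qed.

Lemma centered_overlap_sqr_le (q : R) :
  \sum_s \sum_t mu s * mu t * centered_overlap s t ^+ 2 <=
  4 * N%:R ^+ 2 * \sum_s \sum_t mu s * mu t * (overlap R s t - q) ^+ 2.
Proof.
pose dev t := \sum_u mu u * (overlap R u t - q) ^+ 2.
have le_pointwise s t : centered_overlap s t ^+ 2 <=
    N%:R ^+ 2 * (2 * ((overlap R s t - q) ^+ 2 + dev t)).
  rewrite (centered_overlapE q) exprMn ler_wpM2l ?sqr_ge0 //.
  have /= := weighted_jensen_sqr mu_ge0 mu_sum1 (fun u => overlap R u t - q).
  rewrite -/(dev t); set a := overlap R s t - q; set b := \sum_u _ => le_b.
  by have := sqr_ge0 (a + b); nra.
have dev_sumE : \sum_s \sum_t mu s * mu t * dev t =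
    \sum_s \sum_t mu s * mu t * (overlap R s t - q) ^+ 2.
  transitivity (\sum_t mu t * dev t).
    under eq_bigr do under eq_bigr do rewrite -mulrA.
    by under eq_bigr do rewrite -mulr_sumr; rewrite -mulr_suml mu_sum1 mul1r.
  rewrite [RHS]exchange_big; apply: eq_bigr => t _; rewrite big_distrr /=.
  by apply: eq_bigr => u _; rewrite mulrCA mulrA.
apply: le_trans (ler_sum _ (fun s _ => ler_sum _ (fun t _ =>
  ler_wpM2l (mulr_ge0 (mu_ge0 s) (mu_ge0 t)) (le_pointwise s t)))) _.
set S := \sum_s \sum_t _ * (overlap R s t - q) ^+ 2.
have -> : \sum_s \sum_t mu s * mu t * (N%:R ^+ 2 * (2 * ((overlap R s t - q) ^+ 2 + dev t)))
    = 2 * N%:R ^+ 2 * (S + \sum_s \sum_t mu s * mu t * dev t).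
  rewrite /S -big_split mulr_sumr; apply: eq_bigr => s _.
  by rewrite -big_split mulr_sumr; apply: eq_bigr => t _ /=; ring.
by rewrite dev_sumE (_ : 2 * _ * (S + S) = 4 * N%:R ^+ 2 * S) //; ring.
Qed.

Lemma sqrt_centered_overlap_sqr_le (q : R) :
  Num.sqrt (\sum_s \sum_t mu s * mu t * centered_overlap s t ^+ 2) <=
  2 * N%:R * Num.sqrt (Num.sqrt (\sum_s \sum_t mu s * mu t * (overlap R s t - q) ^+ 4)).
Proof.
apply: le_trans (ler_wsqrtr (centered_overlap_sqr_le q)) _.
rewrite sqrtrM; last by rewrite mulr_ge0 ?sqr_ge0.
rewrite (_ : 4 * N%:R ^+ 2 = (2 * N%:R) ^+ 2); last by ring.
rewrite sqrtr_sqr ger0_norm ?mulr_ge0 // ler_wpM2l ?mulr_ge0 // ler_wsqrtr //.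
exact: product_weight_sqr_le_sqrt_pow4.
Qed.

Lemma sum_sdot_products_le (v w : config N -> R) (q : R) :
  `| \sum_(j < N)
       (\sum_s mu s * ((spin R s j - \sum_u mu u * spin R u j) * v s)) *
       (\sum_s mu s * (w s * spin R s j)) |
  <= 2 * N%:R * Num.sqrt ((\sum_s mu s * v s ^+ 2) * (\sum_s mu s * w s ^+ 2)) *
     Num.sqrt (Num.sqrt (\sum_s \sum_t mu s * mu t * (overlap R s t - q) ^+ 4)).
Proof.
have mu2_ge0 s t : 0 <= mu s * mu t by rewrite mulr_ge0.
have -> : \sum_(j < N)
       (\sum_s mu s * ((spin R s j - \sum_u mu u * spin R u j) * v s)) *
       (\sum_s mu s * (w s * spin R s j)) =
    \sum_s \sum_t mu s * mu t * (v s * w t) * centered_overlap s t.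
  under eq_bigr do rewrite mulr_suml; rewrite exchange_big; apply: eq_bigr => s _.
  under eq_bigr do rewrite mulr_sumr; rewrite exchange_big; apply: eq_bigr => t _.
  by rewrite /centered_overlap mulr_sumr; apply: eq_bigr => j _; ring.
have product_sqrE : \sum_s \sum_t mu s * mu t * (v s * w t) ^+ 2 =
    (\sum_s mu s * v s ^+ 2) * (\sum_s mu s * w s ^+ 2).
  rewrite mulr_suml; apply: eq_bigr => s _.
  by rewrite mulr_sumr; apply: eq_bigr => t _; ring.
have := weighted_cauchy_schwarz2 (fun s t => v s * w t) centered_overlap mu2_ge0.
have wsum_ge0 (z : config N -> R) : 0 <= \sum_s mu s * z s ^+ 2.
  by rewrite sumr_ge0 // => s _; rewrite mulr_ge0 ?sqr_ge0.
rewrite product_sqrE => /ler_wsqrtr; rewrite sqrtr_sqr sqrtrM ?mulr_ge0 //.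
move/le_trans; apply; rewrite [leRHS]mulrAC [leRHS]mulrC ler_wpM2l ?sqrtr_ge0 //.
exact: sqrt_centered_overlap_sqr_le.
Qed.

End CenteredOverlap.

Section GibbsMeasure.
Variables (R : realType) (beta h : R) (N : nat) (g : disorder R N).

Definition gibbs_prob (s : config N) : R :=
  gibbs_weight beta h g s / partition_fn beta h g.

Lemma partition_fn_gt0 : 0 < partition_fn beta h g.
Proof.
rewrite /partition_fn (bigD1 [ffun=> true]) //= ltr_wpDr ?expR_gt0 //.
by rewrite sumr_ge0 // => s _; rewrite expR_ge0.
Qed.

Lemma gibbs_prob_ge0 s : 0 <= gibbs_prob s.
Proof. by rewrite divr_ge0 ?expR_ge0 // ltW // partition_fn_gt0. Qed.

Lemma gibbs_prob_sum1 : \sum_s gibbs_prob s = 1.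
Proof. by rewrite -mulr_suml mulfV // gt_eqF // partition_fn_gt0. Qed.

(* Normalising through [ln] makes measurability in the disorder follow from that
   of [expR] and [ln]. *)
Lemma gibbs_probE s :
  gibbs_prob s = expR (sk_energy beta h g s - ln (partition_fn beta h g)).
Proof. by rewrite expRD expRN lnK // posrE partition_fn_gt0. Qed.

Lemma gibbs1E f : gibbs1 beta h g f = \sum_s gibbs_prob s * f s.
Proof. by rewrite /gibbs1 mulr_suml; apply: eq_bigr => s _; rewrite mulrAC. Qed.

Lemma gibbs2E F :
  gibbs2 beta h g F = \sum_s \sum_t gibbs_prob s * gibbs_prob t * F s t.
Proof.
have Z_neq0 : partition_fn beta h g != 0 by rewrite gt_eqF // partition_fn_gt0.
rewrite /gibbs2 mulr_suml; apply: eq_bigr => s _.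
by rewrite mulr_suml; apply: eq_bigr => t _; rewrite /gibbs_prob; field.
Qed.

Lemma gibbs1_ge0 f : (forall s, 0 <= f s) -> 0 <= gibbs1 beta h g f.
Proof.
by move=> f_ge0; rewrite gibbs1E sumr_ge0 // => s _; rewrite mulr_ge0 ?gibbs_prob_ge0.
Qed.

Lemma gibbs2_ge0 F : (forall s t, 0 <= F s t) -> 0 <= gibbs2 beta h g F.
Proof.
move=> F_ge0; rewrite gibbs2E sumr_ge0 // => s _; rewrite sumr_ge0 // => t _.
by rewrite mulr_ge0 ?F_ge0 // mulr_ge0 // gibbs_prob_ge0.
Qed.

Lemma gibbs_sdot_products_le (v w : 'I_N -> config N -> R) (q : R) : (0 < N)%N ->
  `| (N%:R ^+ 2)^-1 * \sum_(j < N) \sum_(k < N)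
       gibbs1 beta h g (fun s => sdot beta h g j s * v k s) *
       gibbs1 beta h g (fun s => w k s * spin R s j) |
  <= 2 / N%:R * \sum_(k < N)
       Num.sqrt (gibbs1 beta h g (fun s => v k s ^+ 2) * gibbs1 beta h g (fun s => w k s ^+ 2)) *
       Num.sqrt (Num.sqrt (gibbs2 beta h g (fun s1 s2 => (overlap R s1 s2 - q) ^+ 4))).
Proof.
move=> N_gt0; have N_gt0R : 0 < N%:R :> R by rewrite ltr0n.
rewrite exchange_big normrM ger0_norm ?invr_ge0 ?sqr_ge0 //.
apply: le_trans (ler_wpM2l _ (ler_norm_sum _ _ _)) _; first by rewrite invr_ge0 sqr_ge0.
under eq_bigr do under eq_bigr do rewrite /sdot !gibbs1E.
apply: le_trans (ler_wpM2l _ (ler_sum _ (fun k _ => sum_sdot_products_le N_gt0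
  gibbs_prob_ge0 gibbs_prob_sum1 (v k) (w k) q))) _; first by rewrite invr_ge0 sqr_ge0.
rewrite gibbs2E mulr_sumr [leRHS]mulr_sumr le_eqVlt; apply/orP; left; apply/eqP.
apply: eq_bigr => k _; rewrite !gibbs1E; field; exact: lt0r_neq0.
Qed.

End GibbsMeasure.

Section Measurability.
Variables (R : realType) (beta h : R) (N : nat) (d : measure_display) (T : measurableType d).

Lemma measurable_sum_cond (I : finType) (P : pred I) (f : I -> T -> R) :
  (forall i, P i -> measurable_fun setT (f i)) ->
  measurable_fun setT (fun x => \sum_(i | P i) f i x).
Proof.
move=> mf; rewrite (_ : (fun x => _) = fun x => \sum_i if P i then f i x else 0).
  by apply: measurable_sum => i; case Pi : (P i); [exact: mf | exact: measurable_cst].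
by apply/funext => x; exact: big_mkcond.
Qed.

Variable G : 'I_N -> 'I_N -> T -> R.
Hypothesis mG : forall i j : 'I_N, (i < j)%N -> measurable_fun setT (G i j).

Lemma measurable_sk_energy s :
  measurable_fun setT (fun x => sk_energy beta h (disorder_at G x) s).
Proof.
apply: measurable_funD => //; apply: measurable_funM => //.
apply: measurable_sum => i; apply: measurable_sum_cond => j ij.
by do 2 apply: measurable_funM => //; exact: mG.
Qed.

Lemma measurable_gibbs_prob s :
  measurable_fun setT (fun x => gibbs_prob beta h (disorder_at G x) s).
Proof.
under eq_fun do rewrite gibbs_probE.
apply: measurableT_comp (@measurable_expR R) _; apply: measurable_funB.
  exact: measurable_sk_energy.
apply: measurableT_comp (@measurable_ln R) _; apply: measurable_sum => t.
exact: measurableT_comp (@measurable_expR R) (measurable_sk_energy t).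
Qed.

Lemma measurable_gibbs1 (F : config N -> T -> R) :
  (forall s, measurable_fun setT (F s)) ->
  measurable_fun setT (fun x => gibbs1 beta h (disorder_at G x) (fun s => F s x)).
Proof.
move=> mF; under eq_fun do rewrite gibbs1E.
by apply: measurable_sum => s; apply: measurable_funM; [exact: measurable_gibbs_prob|].
Qed.

Lemma measurable_gibbs2 (F : config N -> config N -> T -> R) :
  (forall s t, measurable_fun setT (F s t)) ->
  measurable_fun setT (fun x => gibbs2 beta h (disorder_at G x) (fun s t => F s t x)).
Proof.
move=> mF; under eq_fun do rewrite gibbs2E.
apply: measurable_sum => s; apply: measurable_sum => t.
by apply: measurable_funM => //; apply: measurable_funM; exact: measurable_gibbs_prob.
Qed.

Lemma measurable_sdot_products (v w : 'I_N -> disorder R N -> config N -> R) :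
  (forall k s, measurable_fun setT (fun x => v k (disorder_at G x) s)) ->
  (forall k s, measurable_fun setT (fun x => w k (disorder_at G x) s)) ->
  measurable_fun setT (fun x => (N%:R ^+ 2)^-1 * \sum_(j < N) \sum_(k < N)
    gibbs1 beta h (disorder_at G x)
      (fun s => sdot beta h (disorder_at G x) j s * v k (disorder_at G x) s) *
    gibbs1 beta h (disorder_at G x) (fun s => w k (disorder_at G x) s * spin R s j)).
Proof.
move=> mv mw; apply: measurable_funM => //.
apply: measurable_sum => j; apply: measurable_sum => k.
apply: measurable_funM; apply: measurable_gibbs1 => s; apply: measurable_funM => //.
apply: measurable_funB => //; exact: measurable_gibbs1.
Qed.

End Measurability.

Lemma measurable_sqrt (R : realType) : measurable_fun setT (@Num.sqrt R).
Proof. exact: continuous_measurable_fun (@sqrt_continuous R). Qed.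

Section Expectation.
Variables (d : measure_display) (T : measurableType d) (R : realType).
Variable P : probability T R.
Local Open Scope ereal_scope.

Lemma Lnorm2_nonnegE (a : T -> R) : (forall x, 0 <= a x)%R ->
  'N[P]_(2%:E)[EFin \o a] = sqrte (\int[P]_x (a x ^+ 2)%:E).
Proof.
move=> a_ge0; rewrite Lnorm.unlock /=.
under eq_integral do rewrite ger0_norm // powR_mulrn //.
by rewrite poweR12_sqrt // integral_ge0 // => x _; rewrite lee_fin sqr_ge0.
Qed.

Lemma expectation_cauchy_schwarz (a b : T -> R) :
  measurable_fun setT a -> measurable_fun setT b ->
  (forall x, 0 <= a x)%R -> (forall x, 0 <= b x)%R ->
  \int[P]_x (a x * b x)%:E <=
  sqrte (\int[P]_x (a x ^+ 2)%:E) * sqrte (\int[P]_x (b x ^+ 2)%:E).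
Proof.
move=> ma mb a_ge0 b_ge0.
have half_conj : (2^-1 + 2^-1 = 1 :> R)%R by field.
have := hoelder P ma mb (ltr0Sn _ _) (ltr0Sn _ _) half_conj.
rewrite Lnorm1 !Lnorm2_nonnegE //; apply: le_trans.
by under eq_integral do rewrite /= ger0_norm ?mulr_ge0 //.
Qed.

Lemma expectation_sqrt_le (B : T -> R) :
  measurable_fun setT B -> (forall x, 0 <= B x)%R ->
  \int[P]_x (Num.sqrt (B x))%:E <= sqrte (\int[P]_x (B x)%:E).
Proof.
move=> mB B_ge0.
have := expectation_cauchy_schwarz (measurableT_comp (@measurable_sqrt R) mB)
  (measurable_cst (1 : R)%R) (fun x => sqrtr_ge0 (B x)) (fun _ => ler01).
have -> : \int[P]_x ((cst 1%R x) ^+ 2)%:E = 1.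
  under eq_integral do rewrite expr1n.
  by rewrite integral_cst // mul1e; exact: probability_setT.
rewrite [sqrte 1]/= sqrtr1 mule1.
under eq_integral do rewrite mulr1.
by under [X in _ <= sqrte X]eq_integral do rewrite sqr_sqrtr //.
Qed.

Lemma expectation_le_products_sum n (f b : T -> R) (a : 'I_n -> T -> R) (c : R) :
  measurable_fun setT f -> measurable_fun setT b -> (forall k, measurable_fun setT (a k)) ->
  (forall x, 0 <= b x)%R -> (forall k x, 0 <= a k x)%R -> (0 <= c)%R ->
  (forall x, `|f x| <= c * \sum_k a k x * b x)%R ->
  \int[P]_x (f x)%:E <=
  c%:E * sqrte (\int[P]_x (b x ^+ 2)%:E) * \sum_k sqrte (\int[P]_x (a k x ^+ 2)%:E).
Proof.
move=> mf mb ma b_ge0 a_ge0 c_ge0 f_le.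
have mab k : measurable_fun setT (fun x => a k x * b x)%R by exact: measurable_funM.
have ab_ge0 k x : (0 <= a k x * b x)%R by rewrite mulr_ge0.
apply: le_trans (lee_abs _) _.
apply: le_trans (le_abse_integral _ _ _) _ => //; first exact/measurable_EFinP.
apply: (@le_trans _ _ (\int[P]_x (c * \sum_k a k x * b x)%:E)).
  apply: ge0_le_integral => //.
  - by apply: (measurableT_comp (@abse_measurable R setT)); exact/measurable_EFinP.
  - apply/measurable_EFinP; apply: measurable_funM; first exact: measurable_cst.
    exact: measurable_sum.
  - by move=> x _; rewrite abse_EFin lee_fin.
rewrite (eq_integral (fun x => c%:E * \sum_k (a k x * b x)%:E)); last first.
  by move=> x _; rewrite EFinM sumEFin.
rewrite ge0_integralZl_EFin //; last 2 first.
- by move=> x _; rewrite sume_ge0 // => k _; rewrite lee_fin.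
- by apply: emeasurable_sum => k; exact/measurable_EFinP.
rewrite ge0_integral_sum //; last 2 first.
- by move=> k; exact/measurable_EFinP.
- by move=> k x _; rewrite lee_fin.
rewrite -muleA lee_wpmul2l ?lee_fin // ge0_sume_distrr; last first.
  by move=> k _; exact: sqrte_ge0.
apply: lee_sum => k _; rewrite muleC.
exact: expectation_cauchy_schwarz.
Qed.

Lemma sqrte_expectation_sqrt_le (B : T -> R) (M : R) :
  measurable_fun setT B -> (forall x, 0 <= B x)%R -> (0 <= M)%R ->
  \int[P]_x (B x)%:E <= M%:E ->
  sqrte (\int[P]_x (Num.sqrt (Num.sqrt (B x)) ^+ 2)%:E) <= (Num.sqrt (Num.sqrt M))%:E.
Proof.
move=> mB B_ge0 M_ge0 int_le.
under eq_integral do rewrite sqr_sqrtr ?sqrtr_ge0 //.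
rewrite -[leRHS]/(sqrte (sqrte M%:E)) lee_sqrt ?sqrte_ge0 //.
by apply: le_trans (expectation_sqrt_le mB B_ge0) _; rewrite lee_sqrt.
Qed.

End Expectation.

Lemma sqrt_sqrt_div_sqr (R : realType) (C n : R) : 0 <= C -> 0 < n ->
  2 / n * Num.sqrt (Num.sqrt (C / n ^+ 2)) = 2 * Num.sqrt (Num.sqrt C) / n `^ (3 / 2).
Proof.
move=> C_ge0 n_gt0; have sqrt_n_gt0 : 0 < Num.sqrt n by rewrite sqrtr_gt0.
have -> : n `^ (3 / 2) = n * Num.sqrt n.
  rewrite (_ : 3 / 2 = 1 + 2^-1); last by field.
  by rewrite powRD ?powRr1 ?powR12_sqrt ?ltW // gt_eqF ?implybT.
rewrite sqrtrM ?invr_ge0 ?sqr_ge0 // sqrtrV ?sqr_ge0 // sqrtr_sqr gtr0_norm //.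
rewrite sqrtrM ?invr_ge0 ?sqrtr_ge0 ?ltW // sqrtrV ?ltW //.
by field; rewrite !gt_eqF.
Qed.

Section DisorderAverage.
Variables (R : realType) (beta h : R) (N : nat) (d : measure_display) (T : measurableType d).
Variables (P : probability T R) (G : 'I_N -> 'I_N -> T -> R).
Hypothesis mG : forall i j : 'I_N, (i < j)%N -> measurable_fun setT (G i j).

Lemma expectation_sdot_products_le (q M : R) (v w : 'I_N -> disorder R N -> config N -> R) :
  (0 < N)%N ->
  (forall k s, measurable_fun setT (fun x => v k (disorder_at G x) s)) ->
  (forall k s, measurable_fun setT (fun x => w k (disorder_at G x) s)) ->
  0 <= M ->
  (\int[P]_x (gibbs2 beta h (disorder_at G x)
                (fun s1 s2 => (overlap R s1 s2 - q) ^+ 4))%:E <= M%:E)%E ->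
  (\int[P]_x
      ((N%:R ^+ 2)^-1 * \sum_(j < N) \sum_(k < N)
         gibbs1 beta h (disorder_at G x)
           (fun s => sdot beta h (disorder_at G x) j s * v k (disorder_at G x) s) *
         gibbs1 beta h (disorder_at G x) (fun s => w k (disorder_at G x) s * spin R s j))%:E
   <= (2 / N%:R * Num.sqrt (Num.sqrt M))%:E *
      \sum_(k < N) sqrte (\int[P]_x
        (gibbs1 beta h (disorder_at G x) (fun s => v k (disorder_at G x) s ^+ 2) *
         gibbs1 beta h (disorder_at G x) (fun s => w k (disorder_at G x) s ^+ 2))%:E))%E.
Proof.
move=> N_gt0 mv mw M_ge0 moment_le.
pose B x := gibbs2 beta h (disorder_at G x) (fun s1 s2 => (overlap R s1 s2 - q) ^+ 4).
pose gsqr (u : 'I_N -> disorder R N -> config N -> R) k x :=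
  gibbs1 beta h (disorder_at G x) (fun s => u k (disorder_at G x) s ^+ 2).
have B_ge0 x : 0 <= B x by apply: gibbs2_ge0 => s t; exact: exprn_even_ge0.
have gsqr_ge0 u k x : 0 <= gsqr u k x by apply: gibbs1_ge0 => s; exact: sqr_ge0.
have mB : measurable_fun setT B by exact: measurable_gibbs2.
have mgsqr u k : (forall s, measurable_fun setT (fun x => u k (disorder_at G x) s)) ->
    measurable_fun setT (gsqr u k).
  by move=> mu; apply: measurable_gibbs1 => // s; exact: measurable_funX.
have pointwise x := gibbs_sdot_products_le beta h (disorder_at G x)
  (fun k => v k (disorder_at G x)) (fun k => w k (disorder_at G x)) q N_gt0.
have sqrt_prod_sqrE k : (\int[P]_x (Num.sqrt (gsqr v k x * gsqr w k x) ^+ 2)%:E =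
    \int[P]_x (gsqr v k x * gsqr w k x)%:E)%E.
  by apply: eq_integral => x _; rewrite sqr_sqrtr // mulr_ge0 ?gsqr_ge0.
apply: le_trans (expectation_le_products_sum P _ _ _ _ _ _ pointwise) _.
- exact: measurable_sdot_products.
- by do 2 apply: (measurableT_comp (@measurable_sqrt R)).
- move=> k; apply: (measurableT_comp (@measurable_sqrt R)).
  by apply: measurable_funM; apply: mgsqr.
- by move=> x; rewrite sqrtr_ge0.
- by move=> k x; rewrite sqrtr_ge0.
- by rewrite divr_ge0 ?ler0n.
under eq_bigr do rewrite sqrt_prod_sqrE.
apply: lee_wpmul2r; first by rewrite sume_ge0 // => k _; exact: sqrte_ge0.
rewrite [leRHS]EFinM; apply: lee_wpmul2l; first by rewrite lee_fin divr_ge0 ?ler0n.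
exact: sqrte_expectation_sqrt_le.
Qed.

End DisorderAverage.

Theorem lemma3p1 (R : realType) (beta h q C0 : R) :
  0 < beta ->
  (forall (N : nat) (d : measure_display) (T : measurableType d)
          (P : probability T R) (G : 'I_N -> 'I_N -> T -> R),
      (0 < N)%N -> iid_std_gaussian_disorder P G ->
      (\int[P]_w (gibbs2 beta h (disorder_at G w)
                    (fun s1 s2 => (overlap R s1 s2 - q) ^+ 4))%:E
        <= (C0 / (N%:R ^+ 2))%:E)%E) ->
  exists C : R,
  forall (N : nat) (d : measure_display) (T : measurableType d)
         (P : probability T R) (G : 'I_N -> 'I_N -> T -> R)
         (v w : 'I_N -> disorder R N -> config N -> R),
    (0 < N)%N -> iid_std_gaussian_disorder P G ->
    (forall (k : 'I_N) (s : config N),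
        measurable_fun setT (fun x => v k (disorder_at G x) s)) ->
    (forall (k : 'I_N) (s : config N),
        measurable_fun setT (fun x => w k (disorder_at G x) s)) ->
    (\int[P]_x
        ((N%:R ^+ 2)^-1 *
         \sum_(j < N) \sum_(k < N)
           gibbs1 beta h (disorder_at G x)
             (fun s => sdot beta h (disorder_at G x) j s * v k (disorder_at G x) s)
           * gibbs1 beta h (disorder_at G x)
             (fun s => w k (disorder_at G x) s * spin R s j))%:E
     <= (C / (N%:R `^ (3 / 2)))%:E *
        \sum_(k < N)
          sqrte (\int[P]_x
                   (gibbs1 beta h (disorder_at G x)
                      (fun s => v k (disorder_at G x) s ^+ 2)
                    * gibbs1 beta h (disorder_at G x)
                      (fun s => w k (disorder_at G x) s ^+ 2))%:E))%E.
Proof.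
move=> _ overlap_moment; pose C1 := Num.max C0 0.
have C1_ge0 : 0 <= C1 by rewrite le_max lexx orbT.
exists (2 * Num.sqrt (Num.sqrt C1)) => N d T P G v w N_gt0 iid mv mw.
have mG : forall i j : 'I_N, (i < j)%N -> measurable_fun setT (G i j) by case: iid.
rewrite -sqrt_sqrt_div_sqr ?ltr0n //.
apply: expectation_sdot_products_le => //; first by rewrite divr_ge0 ?sqr_ge0.
apply: le_trans (overlap_moment N d T P G N_gt0 iid) _.
by rewrite lee_fin ler_wpM2r ?invr_ge0 ?sqr_ge0 // le_max lexx.
Qed.
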